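(* Let $n\ge 2$ and let $\sigma$ be a uniformly random permutation of $E(G_n)$. Then the probability that $B(G_n,\sigma)$ is not odd is in $\mathcal{O}\left(\frac{\log^{2}n}{n}\right)$ as $n\to\infty$.
   Context: $G_n$ is the graph with vertex set $\{1,\dots,2n\}$ and edge set $\{\{i,i+1\}: 1\le i\le 2n-1\}\cup\{\{2n,1\}\}\cup\{\{i,i+n\}: 1\le i\le n\}$; it is $3$-regular. For a permutation $\sigma$ of $E(G_n)$, $B(G_n,\sigma)$ is the bipartite graph with parts $V_B=V(G_n)\times\{0,1\}$ and $W_B=E(G_n)$ and edge set $\{\{(v,0),e\}: v\in e\}\cup\{\{(v,1),e\}: v\in\sigma(e)\}$. A bipartite graph with parts $V,W$ in which every vertex of $V$ has degree $3$ is called odd if for every nonempty $X\subseteq W$ there is some $v\in V$ with $|X\cap N(v)|$ odd. *)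

From mathcomp Require Import all_boot all_fingroup.
From Stdlib Require Import Reals.

Set Implicit Arguments.
Unset Strict Implicit.
Unset Printing Implicit Defensive.

(* Vertices of G_n: 'I_(2*n), vertex v (0-based) stands for v+1.
   Edges of G_n: 'I_(3*n), labelled as follows:
     k < 2n        : the cycle edge {k, (k+1) mod 2n}   (i.e. {k+1, k+2}, and {2n,1})
     k = 2n + i    : the chord {i, i+n}  for i < n      (i.e. {i+1, i+1+n})
   For n >= 2 these 3n edges are pairwise distinct, so this labelling is a
   bijection 'I_(3*n) -> E(G_n). *)
Definition edge_mem (n v k : nat) : bool :=
  if (k < 2 * n)%N then (v == k) || (v == (k.+1 %% (2 * n))%N)
  else (v == k - 2 * n)%N || (v == k - 2 * n + n)%N.

(* The bipartite graph B(G_n, sigma): V_B = V(G_n) x {0,1} (false = 0, true = 1),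
   W_B = E(G_n); (v,0) ~ e iff v in e, (v,1) ~ e iff v in sigma(e). *)
Definition B_adj (n : nat) (sigma : {perm 'I_(3 * n)})
    (x : 'I_(2 * n) * bool) (e : 'I_(3 * n)) : bool :=
  if x.2 then edge_mem n x.1 (sigma e) else edge_mem n x.1 e.

Definition odd_bipartite (V W : finType) (adj : V -> W -> bool) : bool :=
  [forall X : {set W}, (X != set0) ==>
     [exists v : V, odd #|[set w in X | adj v w]|]].

Definition prob_not_odd (n : nat) : R :=
  (INR #|[set sigma : {perm 'I_(3 * n)} | ~~ odd_bipartite (B_adj sigma)]|
   / INR #|{perm 'I_(3 * n)}|)%R.

(* B(G_n, s) fails to be odd exactly when some nonempty edge set X is even
   (every vertex has even degree in X) and so is s(X).  Since s(X) is a
   uniform random |X|-subset of the 3n edges, a union bound over X bounds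
   the probability P that B(G_n, s) is not odd by sum_k A_k^2 / C(3n, k),
   where A_k counts the even sets of size k.
   An even set of the Moebius ladder G_n is determined by its cycle edges
   0, ..., n, so there are at most 2^(n+1) of them, and none has more than
   2n edges; the sizes k >= n therefore contribute at most
   4^(n+1) / C(3n, n) = O(1/n).  An even set of size k < n consists of two
   copies i, i + n of the cycle edges indexed by a proper nonempty T of Z_n,
   plus one chord per boundary point of T; as T has at least two boundary
   points, 2|T| + 2 <= k.  Pairing two such T gives
   A_k^2 <= (k - 1) C(2n, k - 2) = O(C(3n, k) / n^2), so the sizes k < n
   contribute O(1/n) as well.  Altogether P <= 25/n. *)

From mathcomp Require Import all_boot all_fingroup.
From Stdlib Require Import Reals Lra.
(* Reals rebinds [_ ^ _] on nat to [Nat.pow]; re-importing ssrnat restores [expn]. *)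
From mathcomp Require Import ssrnat zify.

Set Implicit Arguments.
Unset Strict Implicit.
Unset Printing Implicit Defensive.

Lemma card_set_sum (T : finType) (P : pred T) : #|[set x | P x]| = \sum_x P x.
Proof. by rewrite -sum1_card big_mkcond; apply: eq_bigr => x _; rewrite inE; case: (P x). Qed.

Lemma card_bigcup_le (I T : finType) (P : pred I) (F : I -> {set T}) :
  #|\bigcup_(i | P i) F i| <= \sum_(i | P i) #|F i|.
Proof.
elim/big_rec2: _ => [|i U s _ IH]; first by rewrite cards0.
by rewrite (leq_trans (leq_card_setU _ _)) // leq_add2l.
Qed.

Lemma sum_by_card (T : finType) (P : pred {set T}) (F : {set T} -> nat) m :
  \sum_(X | P X && (#|X| < m)) F X = \sum_(k < m) \sum_(X | P X && (#|X| == k)) F X.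
Proof.
elim: m => [|m IH]; first by rewrite big_ord0 big_pred0 // => X; rewrite andbF.
rewrite (bigID (fun X : {set T} => #|X| < m)) big_ord_recr -IH /=.
by congr (_ + _); apply: eq_bigl => X; rewrite ltnS; case: (P X); case: ltngtP.
Qed.

Lemma leq_bin_half m j k : j <= k -> 2 * k <= m -> 'C(m, j) <= 'C(m, k).
Proof.
elim: k => [|k IH]; first by rewrite leqn0 => /eqP->.
rewrite leq_eqVlt ltnS => /orP[/eqP-> //|jk] km.
apply: leq_trans (IH jk _) _; first lia.
rewrite -(leq_pmul2l (ltn0Sn k)) mul_bin_left leq_mul2r; apply/orP; right; lia.
Qed.

Lemma leq_bin_between m j k : j <= k <= m - j -> 'C(m, j) <= 'C(m, k).
Proof.
move=> /andP[jk km]; have [half|] := leqP (2 * k) m; first exact: leq_bin_half.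
move=> mk; rewrite -[leqRHS](@bin_sub m k); last lia.
apply: leq_bin_half; lia.
Qed.

Lemma bin3n_step k : 'C(3 * k.+1, k.+1) * (k.+1 * (2 * k).+1 * (2 * k).+2) =
                     'C(3 * k, k) * ((3 * k).+1 * (3 * k).+2 * (3 * k).+3).
Proof.
have binF m : 'C(3 * m, m) * (m`! * (2 * m)`!) = (3 * m)`!.
  rewrite -(@bin_fact (3 * m) m); last lia.
  by rewrite (_ : 3 * m - m = 2 * m) //; lia.
apply/eqP; rewrite -(eqn_pmul2r (_ : 0 < k`! * (2 * k)`!)); last first.
  by rewrite muln_gt0 !fact_gt0.
have := binF k.+1; rewrite (_ : 3 * k.+1 = (3 * k).+3); last lia.
rewrite (_ : 2 * k.+1 = (2 * k).+2); last lia.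
rewrite !factS -binF => e; apply/eqP; move: e.
by move: ('C(_, _)) ('C(_, _)) (k`!) ((2 * k)`!) => c c' a b; lia.
Qed.

Lemma bin3n_lower n : 6 ^ n <= 3 * 'C(3 * n, n).
Proof.
have [|n4] := leqP n 4; first by case: n => [|[|[|[|[|]]]]].
elim: n n4 => // k IH k4.
have le6k : 6 ^ k <= 3 * 'C(3 * k, k).
  by move: k4; rewrite ltnS leq_eqVlt => /orP[/eqP<- //|/IH].
rewrite expnS (leq_trans (leq_mul (leqnn 6) le6k)) // mulnCA leq_mul2l /=.
rewrite -(@leq_pmul2r (k.+1 * (2 * k).+1 * (2 * k).+2)) // bin3n_step mulnAC mulnC.
by rewrite leq_mul2l; apply/orP; right; nia.
Qed.

Lemma n_pow4_le_pow6 n : n * 4 ^ n <= 6 ^ n.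
Proof.
elim: n => // n IH; rewrite !expnS.
have [n1|n2] := leqP n 1; first by case: n n1 {IH} => [|[]].
by move: IH; move: (4 ^ n) (6 ^ n) => a b; nia.
Qed.

Lemma bin3n_large n : n * 2 ^ n.+1 * 2 ^ n.+1 <= 12 * 'C(3 * n, n).
Proof.
rewrite -mulnA -expnD addnn -mul2n expnM (_ : 2 ^ 2 = 4) // expnS.
by have := n_pow4_le_pow6 n; have := bin3n_lower n; lia.
Qed.

Lemma bin_ratio p q m j : p <= q -> 'C(p * m, j) * q ^ j <= 'C(q * m, j) * p ^ j.
Proof.
move=> pq; elim: j => [|j IH]; first by rewrite !bin0.
rewrite -(leq_pmul2l (ltn0Sn j)) !expnS !mulnA (mul_bin_left (p * m)) (mul_bin_left (q * m)).
have h : q * (p * m - j) <= p * (q * m - j).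
  by rewrite !mulnBr mulnCA mulnA leq_sub2l // leq_mul2r pq orbT.
by move: (leq_mul h IH); rewrite !mulnA; lia.
Qed.

Lemma cube_pow_le j : j.+2 ^ 3 * 2 ^ j <= 50 * 3 ^ j.
Proof.
elim: j => // j IH; have [j4|j5] := leqP j 4; first by case: j j4 {IH} => [|[|[|[|[|]]]]].
rewrite !expnS; move: IH; rewrite !expnS expn0 !muln1.
by move: (2 ^ j) (3 ^ j) => y x; nia.
Qed.

Lemma small_ratio n j : j < n -> j.+1 * 'C(2 * n, j) * n ^ 2 <= 13 * 'C(3 * n, j.+2).
Proof.
move=> jn.
have ratio := @bin_ratio 2 3 n j isT.
have shift : 'C(3 * n, j.+2) * (j.+2 * j.+1) = 'C(3 * n, j) * ((3 * n - j.+1) * (3 * n - j)).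
  transitivity (j.+1 * (j.+2 * 'C(3 * n, j.+2))); first lia.
  by rewrite mul_bin_left mulnCA mul_bin_left mulnA mulnC.
have far : 4 * n ^ 2 <= (3 * n - j.+1) * (3 * n - j).
  by rewrite (_ : 4 * n ^ 2 = (2 * n) * (2 * n)) ?leq_mul //; [lia..|rewrite mulnACA].
have cube := cube_pow_le j; have x_gt0 : 0 < 3 ^ j by rewrite expn_gt0.
move: ratio shift far cube x_gt0.
move: ('C(2 * n, j)) ('C(3 * n, j)) ('C(3 * n, j.+2)) (3 ^ j) (2 ^ j) (n ^ 2) => a b c x y N.
move: ((3 * n - j.+1) * (3 * n - j)) => Q ratio shift far cube x_gt0.
(* (j+1) C(2n,j) n^2 4 3^j <= (j+1) C(3n,j) 2^j (3n-j-1)(3n-j)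
                           = (j+1)^2 (j+2) C(3n,j+2) 2^j <= 50 3^j C(3n,j+2) *)
have le_ratio : j.+1 * a * N * (4 * x) <= j.+1 * (b * y) * Q.
  by apply: leq_trans (leq_mul (leq_mul (leqnn j.+1) ratio) far); lia.
have le_cube : j.+1 * (b * y) * Q <= 50 * x * c.
  have cube_c := leq_mul cube (leqnn c).
  have le_j : j.+1 * j.+1 * j.+2 * (y * c) <= j.+2 ^ 3 * (y * c).
    by rewrite leq_mul2r !expnS expn0 muln1; apply/orP; right; nia.
  have -> : j.+1 * (b * y) * Q = j.+1 * y * (b * Q) by lia.
  rewrite -shift; lia.
have : j.+1 * a * N * 4 <= 50 * c by rewrite -(leq_pmul2r x_gt0); lia.
lia.
Qed.

Lemma card_small_sets (T : finType) j : 2 * j <= #|T| ->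
  #|[set A : {set T} | #|A| <= j]| <= j.+1 * 'C(#|T|, j).
Proof.
move=> le_jT; have cover : [set A : {set T} | #|A| <= j] \subset
                           \bigcup_(d < j.+1) [set A : {set T} | #|A| == d].
  apply/subsetP => A; rewrite inE -ltnS => lt_A.
  by apply/bigcupP; exists (Ordinal lt_A); rewrite ?inE.
apply: leq_trans (subset_leq_card cover) (leq_trans (card_bigcup_le _ _) _).
rewrite -[j.+1 in leqRHS]card_ord -sum_nat_const; apply: leq_sum => d _.
by rewrite card_draws leq_bin_half // -ltnS.
Qed.

Lemma card_pairs_small_sets (T1 T2 : finType) j :
  #|[set B : {set T1} | 2 * #|B| <= j]| * #|[set B : {set T2} | 2 * #|B| <= j]| <=
  #|[set A : {set T1 + T2} | #|A| <= j]|.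
Proof.
pose join (p : {set T1} * {set T2}) := inl @: p.1 :|: inr @: p.2.
have join_inj : injective join.
  apply: (can_inj (g := fun A : {set T1 + T2} => (inl @^-1: A, inr @^-1: A))) => -[B1 B2].
  congr pair; apply/setP => x; rewrite !inE mem_imset; try by move=> ? ? [].
    by rewrite orbC; case: imsetP => // -[].
  by case: imsetP => // -[].
rewrite -cardsX -(card_imset _ join_inj); apply/subset_leq_card/subsetP => A /imsetP[[B1 B2]].
rewrite !inE /= => /andP[le_B1 le_B2] ->; rewrite (leq_trans (leq_card_setU _ _)) //.
by rewrite (leq_trans (leq_add (leq_imset_card _ _) (leq_imset_card _ _))) //=; lia.
Qed.

Section PermImage.
Variable T : finType.
Implicit Types X Y : {set T}.

Lemma card_permT : #|{perm T}| = #|T|`!.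
Proof.
rewrite -cardsT -card_perm; apply: eq_card => s.
by rewrite !inE; apply/esym/subsetP => x _; rewrite inE.
Qed.

Lemma exists_perm_imset X Y : #|X| = #|Y| -> exists s : {perm T}, s @: X = Y.
Proof.
move: {2}#|X :\: Y| (erefl #|X :\: Y|) => m; elim: m X => [|m IH] X hm hXY.
  exists 1%g; rewrite (eq_imset _ (@perm1 T)) imset_id.
  by apply/setP/subset_cardP => //; rewrite -setD_eq0 -cards_eq0 hm.
have [x] : exists x, x \in X :\: Y by apply/card_gt0P; rewrite hm.
have [y] : exists y, y \in Y :\: X.
  by apply/card_gt0P; rewrite cardsD setIC -hXY -cardsD hm.
rewrite !inE => /andP[yX yY] /andP[xY xX].
have hX' : #|tperm x y @: X| = #|Y| by rewrite card_imset ?hXY //; exact: perm_inj.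
have hm' : #|(tperm x y @: X) :\: Y| = m.
  suff -> : (tperm x y @: X) :\: Y = (X :\: Y) :\ x.
    by move: (cardsD1 x (X :\: Y)); rewrite !inE xY xX hm; case.
  apply/setP => z; rewrite !inE -[z in z \in _ @: _](tpermK x y) mem_imset; last first.
    exact: perm_inj.
  case: tpermP => [->|->|/eqP/negbTE-> _];
    by rewrite ?eqxx ?(negbTE xY) ?(negbTE yX) ?yY ?andbF.
have [s <-] := IH (tperm x y @: X) hm' hX'; exists (tperm x y * s)%g.
by rewrite -imset_comp; apply: eq_imset => z; rewrite permM.
Qed.

Definition perm_fiber X Y := [set s : {perm T} | s @: X == Y].

Lemma card_perm_fiber X Y : #|Y| = #|X| -> #|perm_fiber X Y| = #|perm_fiber X X|.
Proof.
suff le_fiber Y1 Y2 : #|Y1| = #|Y2| -> #|perm_fiber X Y1| <= #|perm_fiber X Y2|.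
  by move=> hY; apply/eqP; rewrite eqn_leq !le_fiber.
move=> /exists_perm_imset[t htY]; rewrite -(card_imset _ (mulIg t)).
apply/subset_leq_card/subsetP => u /imsetP[s]; rewrite !inE => /eqP hs ->.
by rewrite -htY -hs -imset_comp; apply/eqP/eq_imset => z; rewrite permM.
Qed.

Lemma card_perm_imset_in_fiber (S : {set {set T}}) X :
  #|[set s : {perm T} | s @: X \in S]| =
  #|[set Y in S | #|Y| == #|X|]| * #|perm_fiber X X|.
Proof.
rewrite -sum1_card (partition_big (fun s : {perm T} => s @: X)
  (fun Y => (Y \in S) && (#|Y| == #|X|))) /=; last first.
  by move=> s; rewrite inE => ->; rewrite card_imset //=; apply: perm_inj.
rewrite (eq_bigr (fun=> #|perm_fiber X X|)) => [|Y /andP[SY /eqP hY]]; last first.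
  rewrite -(card_perm_fiber hY) -sum1_card; apply: eq_bigl => s.
  by rewrite !inE; case: eqP => [->|]; rewrite ?SY ?andbF.
by rewrite sum_nat_const; congr (_ * _); apply: eq_card => Y; rewrite inE.
Qed.

Lemma card_perm_imset_in (S : {set {set T}}) X :
  #|[set s : {perm T} | s @: X \in S]| * 'C(#|T|, #|X|) =
  #|[set Y in S | #|Y| == #|X|]| * #|T|`!.
Proof.
have permT : #|[set s : {perm T} | s @: X \in setT]| = #|T|`!.
  by rewrite -card_permT; apply: eq_card => s; rewrite !inE.
have drawsT : #|[set Y in [set: {set T}] | #|Y| == #|X|]| = 'C(#|T|, #|X|).
  by rewrite -card_draws; apply: eq_card => Y; rewrite !inE.
rewrite card_perm_imset_in_fiber -permT card_perm_imset_in_fiber drawsT.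
by rewrite mulnAC mulnA.
Qed.

End PermImage.

Section CyclicBoundary.
Variable n : nat.
Implicit Types T : {set 'I_n}.

Definition cyc_boundary T := [set i | (i \in T) != (ord_pred i \in T)].
Definition cyc_starts T := [set i in T | ord_pred i \notin T].

Lemma cyc_boundaryC T : cyc_boundary (~: T) = cyc_boundary T.
Proof. by apply/setP => i; rewrite !inE; case: (i \in T); case: (_ \in T). Qed.

Lemma card_cyc_boundary T : #|cyc_boundary T| = #|cyc_starts T| + #|cyc_starts (~: T)|.
Proof.
have -> : cyc_boundary T = cyc_starts T :|: cyc_starts (~: T).
  by apply/setP => i; rewrite !inE; case: (i \in T); case: (_ \in T).
apply/eqP; rewrite (leq_card_setU _ _).2 -setI_eq0; apply/eqP/setP => i.
by rewrite !inE; case: (i \in T); rewrite ?andbF.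
Qed.

Lemma card_cyc_startsC_le T : #|cyc_starts (~: T)| <= #|T|.
Proof.
rewrite -(card_imset _ (@ord_pred_inj n)); apply/subset_leq_card/subsetP.
by move=> j /imsetP[i]; rewrite !inE negbK => /andP[_ ?] ->.
Qed.

Lemma card_cyc_boundary_le T : #|cyc_boundary T| <= 2 * #|T|.
Proof.
rewrite card_cyc_boundary mul2n -addnn leq_add ?card_cyc_startsC_le //.
by apply/subset_leq_card/subsetP => i; rewrite inE => /andP[].
Qed.

Lemma card_cyc_boundary_leC T : #|cyc_boundary T| <= 2 * (n - #|T|).
Proof.
rewrite -cyc_boundaryC (_ : n - #|T| = #|~: T|) ?card_cyc_boundary_le //.
by rewrite [RHS]cardsCs setCK card_ord.
Qed.

Lemma val_iter_ordS m (i : 'I_n) : val (iter m (@ordS n) i) = (i + m) %% n.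
Proof.
elim: m => [|m IH] /=; first by rewrite addn0 modn_small.
by rewrite IH addnS -addn1 modnDml addn1.
Qed.

Lemma pred_closed_setT T : (forall i, i \in T -> ord_pred i \in T) -> T != set0 -> T = setT.
Proof.
move=> closedT /set0Pn[i iT]; apply/setP => j; rewrite inE.
have iterT m k : iter m (@ordS n) k \in T -> k \in T.
  elim: m k => [|m IH] k //; rewrite iterSr => /IH /closedT; by rewrite ordSK.
apply: (iterT (i + (n - j))); suff -> : iter (i + (n - j)) (@ordS n) j = i by [].
apply: val_inj; rewrite val_iter_ordS addnCA subnKC ?modnDr ?modn_small //.
exact: ltnW.
Qed.

Lemma cyc_starts_neq0 T : T != set0 -> T != setT -> cyc_starts T != set0.
Proof.
move=> T0 TT; apply: contra TT => /eqP startsT; apply/eqP/pred_closed_setT => // i iT.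
apply: contraT => predT; have : i \in cyc_starts T by rewrite inE iT.
by rewrite startsT inE.
Qed.

Lemma card_cyc_boundary_ge2 T : T != set0 -> T != setT -> 2 <= #|cyc_boundary T|.
Proof.
move=> T0 TT; rewrite card_cyc_boundary.
have C0 : ~: T != set0 by rewrite -setCT (inj_eq (@setC_inj _)).
have CT : ~: T != setT by rewrite -setC0 (inj_eq (@setC_inj _)).
by rewrite -addn1 leq_add // card_gt0 cyc_starts_neq0.
Qed.

End CyclicBoundary.

Section EvenSets.
Variable n : nat.
Hypothesis n_gt1 : 1 < n.
Implicit Types X Y : {set 'I_(3 * n)}.

(* Edges are addressed by their nat labels, so that the three edges at a
   vertex are given by arithmetic; [has_edge X k] is false for [3 * n <= k]. *)
Definition has_edge X k := [exists e in X, val e == k].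

Definition deg X (v : 'I_(2 * n)) := #|[set e in X | edge_mem n v e]|.

Definition even_set X := [forall v, ~~ odd (deg X v)].

Lemma has_edgeE X (e : 'I_(3 * n)) : has_edge X e = (e \in X).
Proof.
apply/existsP/idP => [[e' /andP[e'X /eqP/val_inj <-]] // | eX].
by exists e; rewrite eX eqxx.
Qed.

Lemma card_has_edge X (P : pred nat) :
  #|[set e in X | P e]| = \sum_(k < 3 * n) (has_edge X k && P k).
Proof.
rewrite -sum1_card big_mkcond; apply: eq_bigr => e _.
by rewrite inE has_edgeE; case: (_ && _).
Qed.

Lemma sum_has_edge_eq X a : a < 3 * n ->
  \sum_(k < 3 * n) (has_edge X k && (k == a :> nat)) = has_edge X a.
Proof.
move=> lt_a; rewrite (bigD1 (Ordinal lt_a)) //= eqxx andbT big1 ?addn0 // => k.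
by rewrite -val_eqE /= => /negbTE->; rewrite andbF.
Qed.

Lemma even_vertex_xor X (v : 'I_(2 * n)) a b c : even_set X ->
  a < 3 * n -> b < 3 * n -> c < 3 * n -> uniq [:: a; b; c] ->
  (forall k, k < 3 * n -> edge_mem n v k = [|| k == a, k == b | k == c]) ->
  has_edge X c = has_edge X a (+) has_edge X b.
Proof.
move=> /forallP/(_ v) evX lt_a lt_b lt_c abc nbv; move: evX.
rewrite /deg card_has_edge (eq_bigr (fun k : 'I_(3 * n) => (has_edge X k && (k == a :> nat))
  + (has_edge X k && (k == b :> nat)) + (has_edge X k && (k == c :> nat)))) => [|k _].
  rewrite !big_split /= !sum_has_edge_eq // !oddD !oddb.
  by case: (has_edge X a); case: (has_edge X b); case: (has_edge X c).
move: abc; rewrite nbv //= !inE !negb_or andbT => /andP[/andP[ab ac] bc].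
case: (eqVneq (k : nat) a) => [->|_]; first by rewrite (negbTE ab) (negbTE ac) andbF !addn0.
case: (eqVneq (k : nat) b) => [->|_]; first by rewrite (negbTE bc) andbF addn0.
by case: (k == c :> nat); rewrite ?andbF.
Qed.

Definition cycle_prev i := if i is i'.+1 then i' else (2 * n).-1.

Lemma edge_mem_low i k : i < n -> k < 3 * n ->
  edge_mem n i k = [|| k == i, k == cycle_prev i | k == 2 * n + i].
Proof.
move=> lt_in lt_k; rewrite /edge_mem; case: ifP => k2n.
  case: (eqVneq k.+1 (2 * n)) => [e|ne]; [rewrite e modnn | rewrite modn_small; last lia].
all: by case: i lt_in => [|i] lt_in /=; apply/idP/idP; lia.
Qed.

Lemma edge_mem_high i k : i < n -> k < 3 * n ->
  edge_mem n (i + n) k = [|| k == i + n, k == (i + n).-1 | k == 2 * n + i].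
Proof.
move=> lt_in lt_k; rewrite /edge_mem; case: ifP => k2n.
  case: (eqVneq k.+1 (2 * n)) => [e|ne]; [rewrite e modnn | rewrite modn_small; last lia].
all: by apply/idP/idP; lia.
Qed.

Lemma even_chord_low X i : even_set X -> i < n ->
  has_edge X (2 * n + i) = has_edge X i (+) has_edge X (cycle_prev i).
Proof.
move=> evX lt_in; have lt_v : i < 2 * n by lia.
apply: (even_vertex_xor (v := Ordinal lt_v)) => //; [lia|case: i lt_in {lt_v} => /= *; lia|lia| |].
  rewrite /= !inE; case: i lt_in {lt_v} => [|i] lt_in /=;
    by apply/and3P; split; apply/eqP; lia.
by move=> k; apply: edge_mem_low.
Qed.

Lemma even_chord_high X i : even_set X -> i < n ->
  has_edge X (2 * n + i) = has_edge X (i + n) (+) has_edge X (i + n).-1.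
Proof.
move=> evX lt_in; have lt_v : i + n < 2 * n by lia.
apply: (even_vertex_xor (v := Ordinal lt_v)) => //; [lia..| |].
  by rewrite /= !inE; apply/and3P; split; apply/eqP; lia.
by move=> k; apply: edge_mem_high.
Qed.

Definition twisted X := has_edge X 0 (+) has_edge X n.

Lemma even_twist X i : even_set X -> i < n -> has_edge X (i + n) = has_edge X i (+) twisted X.
Proof.
move=> evX; elim: i => [|i IH] lt_in; first by rewrite add0n /twisted addKb.
have := even_chord_low evX lt_in; have := even_chord_high evX lt_in.
rewrite /= addSn /= (IH (ltnW lt_in)) => ->.
by case: (has_edge X i); case: (has_edge X i.+1); case: (has_edge X (i + n).+1); case: twisted.
Qed.

Lemma even_inj X Y : even_set X -> even_set Y ->
  (forall i, i <= n -> has_edge X i = has_edge Y i) -> X = Y.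
Proof.
move=> evX evY eqXY; have eq_tw : twisted X = twisted Y by rewrite /twisted !eqXY.
have eq_cycle k : k < 2 * n -> has_edge X k = has_edge Y k.
  move=> lt_k; have [lt_kn|le_nk] := ltnP k n; first by rewrite eqXY // ltnW.
  by rewrite -(subnK le_nk) !even_twist ?eq_tw ?eqXY //; lia.
apply/setP => e; rewrite -!has_edgeE.
have [|le_2n] := ltnP e (2 * n); first exact: eq_cycle.
have lt_e := ltn_ord e.
rewrite -(subnKC le_2n) !even_chord_low ?eq_cycle //; try lia.
by case E: (e - 2 * n) => /=; lia.
Qed.

Lemma card_even_sets : #|[set X | even_set X]| <= 2 ^ n.+1.
Proof.
pose code X := [ffun i : 'I_n.+1 => has_edge X i].
rewrite -(card_in_imset (f := code)) => [|X Y]; last first.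
  rewrite !inE => evX evY /ffunP eq_code; apply: even_inj => // i le_in.
  by have := eq_code (Ordinal (le_in : i < n.+1)); rewrite !ffunE.
by rewrite (leq_trans (max_card _)) // card_ffun card_bool card_ord.
Qed.

Lemma card_even_split X :
  #|X| = \sum_(i < n) (has_edge X i + has_edge X (i + n) + has_edge X (2 * n + i)).
Proof.
transitivity #|[set e in X | xpredT (e : nat)]|.
  by apply: eq_card => e; rewrite inE andbT.
rewrite (card_has_edge X xpredT) (_ : 3 * n = n + n + n); last lia.
rewrite !big_split_ord !big_split /=; congr (_ + _ + _); apply: eq_bigr => i _; rewrite andbT //.
  by rewrite addnC.
by rewrite addnn -mul2n.
Qed.

Lemma card_even_twisted X : even_set X -> twisted X -> n <= #|X| <= 2 * n.
Proof.
move=> evX tw; rewrite card_even_split.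
rewrite (eq_bigr (fun i : 'I_n => 1 + has_edge X (2 * n + i))) => [|i _]; last first.
  by rewrite even_twist // tw; case: has_edge.
have : \sum_(i < n) has_edge X (2 * n + i) <= n.
  by rewrite -[n in _ <= n]card_ord -sum1_card leq_sum // => i _; apply: leq_b1.
by rewrite big_split /= sum1_card card_ord; lia.
Qed.

Definition cycle_support X : {set 'I_n} := [set i : 'I_n | has_edge X i].

Lemma even_chord_untwisted X (i : 'I_n) : even_set X -> ~~ twisted X ->
  has_edge X (2 * n + i) = has_edge X i (+) has_edge X (ord_pred i).
Proof.
move=> evX /negbTE untw; rewrite even_chord_low //; congr (_ (+) _).
case: i => [[|i] lt_in] /=.
  rewrite add0n modn_small; last lia.
  rewrite (_ : (2 * n).-1 = n.-1 + n); last lia.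
  by rewrite even_twist ?untw ?addbF //; lia.
by rewrite modnDr modn_small // ltnW.
Qed.

Lemma card_even_untwisted X : even_set X -> ~~ twisted X ->
  #|X| = 2 * #|cycle_support X| + #|cyc_boundary (cycle_support X)|.
Proof.
move=> evX untw; rewrite card_even_split {1}/cycle_support /cyc_boundary.
rewrite !card_set_sum big_distrr -big_split /=; apply: eq_bigr => i _.
rewrite even_twist // (negbTE untw) addbF even_chord_untwisted // /cycle_support !inE.
by case: has_edge; case: has_edge.
Qed.

Lemma even_card_le X : even_set X -> #|X| <= 2 * n.
Proof.
move=> evX; have [tw|untw] := boolP (twisted X); first by case/andP: (card_even_twisted evX tw).
rewrite card_even_untwisted //; have := card_cyc_boundary_leC (cycle_support X).
have : #|cycle_support X| <= n by rewrite -[n in _ <= n]card_ord max_card.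
lia.
Qed.

Lemma card_even_small k : 0 < k < n ->
  #|[set X | even_set X & #|X| == k]| <= #|[set T : {set 'I_n} | 2 * #|T| + 2 <= k]|.
Proof.
move=> /andP[k_gt0 lt_kn].
have untw X : X \in [set X | even_set X & #|X| == k] -> ~~ twisted X.
  rewrite inE => /andP[evX /eqP cardX]; apply/negP => tw.
  by have := card_even_twisted evX tw; lia.
rewrite -(card_in_imset (f := cycle_support)) => [|X Y XS YS eq_supp]; last first.
  move: (untw X XS) (untw Y YS); rewrite !inE in XS YS; case/andP: XS => evX _.
  case/andP: YS => evY _; rewrite /twisted !negb_add => /eqP eqX /eqP eqY.
  have eq_low i : i < n -> has_edge X i = has_edge Y i.
    by move=> lt_in; move/setP/(_ (Ordinal lt_in)): eq_supp; rewrite !inE.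
  apply: even_inj => // i; rewrite leq_eqVlt => /orP[/eqP->|/eq_low //].
  by rewrite -eqX -eqY eq_low; lia.
apply/subset_leq_card/subsetP => _ /imsetP[X XS ->]; have untwX := untw X XS.
move: XS; rewrite !inE => /andP[evX /eqP cardX]; move: cardX.
rewrite card_even_untwisted //; set T := cycle_support X => cardX.
have T_gt0 : 0 < #|T| by have := card_cyc_boundary_le T; lia.
have T_ltn : #|T| < n by lia.
have := @card_cyc_boundary_ge2 _ T; rewrite -cards_eq0 -lt0n T_gt0.
have -> : T != setT by apply: contraTneq T_ltn => ->; rewrite cardsT card_ord ltnn.
by move=> /(_ isT isT); lia.
Qed.

End EvenSets.

Lemma not_odd_even_witness n (s : {perm 'I_(3 * n)}) : ~~ odd_bipartite (B_adj s) ->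
  exists2 X, X \in [set X | even_set X] :\ set0 & s @: X \in [set X | even_set X].
Proof.
rewrite negb_forall => /existsP[X]; rewrite negb_imply => /andP[X0 /existsPn noodd].
exists X; rewrite !inE ?X0 /=; apply/forallP => v.
  by have := noodd (v, false).
have := noodd (v, true); rewrite /B_adj /deg /=.
suff -> : [set e in s @: X | edge_mem n v e] = s @: [set e in X | edge_mem n v (s e)].
  by rewrite card_imset //; apply: perm_inj.
apply/setP => e; rewrite inE; apply/andP/imsetP => [[/imsetP[e' e'X ->] ve]|[e' e'X ->]].
  by exists e'; rewrite // inE e'X.
by move: e'X; rewrite inE => /andP[e'X ve]; rewrite imset_f.
Qed.

Section Counting.
Variable n : nat.
Hypothesis n_gt3 : 3 < n.

Let n_gt1 : 1 < n. Proof. exact: ltn_trans n_gt3. Qed.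

Implicit Types X : {set 'I_(3 * n)}.

Local Notation Z := [set X : {set 'I_(3 * n)} | even_set X].
Local Notation A k := #|[set Y in Z | #|Y| == k]|.
Local Notation hits X := #|[set s : {perm 'I_(3 * n)} | s @: X \in Z]|.

Lemma hits_bin X : hits X * 'C(3 * n, #|X|) = A #|X| * (3 * n)`!.
Proof. by have := card_perm_imset_in Z X; rewrite card_ord. Qed.

Lemma card_not_odd_le :
  #|[set s : {perm 'I_(3 * n)} | ~~ odd_bipartite (B_adj s)]| <= \sum_(X in Z :\ set0) hits X.
Proof.
apply: leq_trans (card_bigcup_le _ _); apply/subset_leq_card/subsetP => s.
by rewrite inE => /not_odd_even_witness[X XZ sXZ]; apply/bigcupP; exists X; rewrite // inE.
Qed.

Lemma hits_large X : X \in Z -> n <= #|X| -> hits X * 'C(3 * n, n) <= #|Z| * (3 * n)`!.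
Proof.
rewrite inE => evX le_nX; have le_X2n := even_card_le n_gt1 evX.
apply: leq_trans (_ : hits X * 'C(3 * n, #|X|) <= _).
  by rewrite leq_mul2l leq_bin_between ?orbT //; lia.
rewrite hits_bin leq_mul2r; apply/orP; right.
by apply/subset_leq_card/subsetP => Y; rewrite inE => /andP[].
Qed.

Lemma large_hits : (\sum_(X in Z :\ set0 | ~~ (#|X| < n)) hits X) * n <= 12 * (3 * n)`!.
Proof.
have C_gt0 : 0 < 'C(3 * n, n) by rewrite bin_gt0; lia.
have sum_le : (\sum_(X in Z :\ set0 | ~~ (#|X| < n)) hits X) * 'C(3 * n, n) <=
              #|Z| * (#|Z| * (3 * n)`!).
  rewrite big_distrl /=.
  apply: leq_trans (_ : \sum_(X in Z :\ set0 | ~~ (#|X| < n)) #|Z| * (3 * n)`! <= _).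
    apply: leq_sum => X /andP[]; rewrite !inE -leqNgt => /andP[_ evX] le_nX.
    by apply: hits_large; rewrite ?inE.
  rewrite sum_nat_const leq_mul2r; apply/orP; right.
  by apply/subset_leq_card/subsetP => X; rewrite unfold_in !inE => /andP[/andP[_ ->]].
have Z_le := leq_mul (leq_mul (leqnn n) (card_even_sets n_gt1)) (card_even_sets n_gt1).
rewrite -(leq_pmul2r C_gt0); move: sum_le (leq_trans Z_le (bin3n_large n)).
move: (\sum_(_ in _ | _) _) #|Z| ('C(_, _)) ((3 * n)`!) => L z c f sum_le le_z.
apply: leq_trans (_ : z * (z * f) * n <= _).
  by rewrite mulnAC leq_mul2r sum_le orbT.
by have := leq_mul le_z (leqnn f); lia.
Qed.

Lemma even_small_sq k : 0 < k < n -> A k * A k * n ^ 2 <= 13 * 'C(3 * n, k).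
Proof.
move=> lt_k; have := card_even_small n_gt1 lt_k.
rewrite (_ : [set X | even_set X & #|X| == k] = [set Y in Z | #|Y| == k]); last first.
  by apply/setP => X; rewrite !inE.
case: k lt_k => [|[|j]] // /andP[_ lt_jn] le_A.
  suff -> : A 1 = 0 by [].
  apply/eqP; rewrite -leqn0 (leq_trans le_A) // leqn0 cards_eq0.
  by apply/eqP/setP => T; rewrite !inE addn2.
have {}le_A : A j.+2 <= #|[set B : {set 'I_n} | 2 * #|B| <= j]|.
  by apply: leq_trans le_A _; apply/subset_leq_card/subsetP => T; rewrite !inE addn2 !ltnS.
have QQ : #|[set B : {set 'I_n} | 2 * #|B| <= j]| * #|[set B : {set 'I_n} | 2 * #|B| <= j]|
          <= j.+1 * 'C(2 * n, j).
  apply: leq_trans (card_pairs_small_sets 'I_n 'I_n j) _.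
  have := @card_small_sets ('I_n + 'I_n)%type j.
  by rewrite card_sum !card_ord addnn -mul2n; apply; lia.
apply: leq_trans _ (small_ratio (ltnW (ltnW lt_jn))); rewrite leq_mul2r; apply/orP; right.
exact: leq_trans (leq_mul le_A le_A) QQ.
Qed.

Lemma sum_hits_size k : k < n ->
  (\sum_(X | (X \in Z :\ set0) && (#|X| == k)) hits X) * n ^ 2 <= 13 * (3 * n)`!.
Proof.
move=> lt_kn; have [->|k_gt0] := posnP k.
  by rewrite big_pred0 // => X; rewrite !inE cards_eq0; case: (X == set0); rewrite ?andbF.
have C_gt0 : 0 < 'C(3 * n, k) by rewrite bin_gt0; lia.
rewrite -(leq_pmul2r C_gt0) mulnAC big_distrl /=.
rewrite (eq_bigr (fun _ => A k * (3 * n)`!)) => [|X /andP[_ /eqP cX]]; last first.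
  by rewrite -cX hits_bin.
rewrite sum_nat_const (eq_card (B := [set Y in Z | #|Y| == k])) => [|X]; last first.
  rewrite unfold_in !inE -cards_eq0 -lt0n.
  by case: eqP => [->|]; rewrite ?andbF ?andbT ?k_gt0.
have := @even_small_sq k; rewrite k_gt0 lt_kn => /(_ isT); move: (A k) => a.
by move/(fun le_a => leq_mul le_a (leqnn (3 * n)`!)); lia.
Qed.

Lemma small_hits : (\sum_(X in Z :\ set0 | #|X| < n) hits X) * n <= 13 * (3 * n)`!.
Proof.
rewrite sum_by_card -(leq_pmul2r (ltnW n_gt1)) -mulnA mulnn big_distrl /=.
have := @leq_sum _ (index_enum 'I_n) xpredT _ _ (fun k _ => sum_hits_size (ltn_ord k)).
by move/leq_trans; apply; rewrite sum_nat_const card_ord mulnC.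
Qed.

Lemma card_not_odd_bound :
  #|[set s : {perm 'I_(3 * n)} | ~~ odd_bipartite (B_adj s)]| * n <= 25 * (3 * n)`!.
Proof.
rewrite (leq_trans (leq_mul (card_not_odd_le) (leqnn n))) //.
rewrite (bigID (fun X => #|X| < n)) /= mulnDl.
by apply: leq_trans (leq_add small_hits large_hits) _; rewrite -mulnDl.
Qed.

End Counting.

Lemma prob_not_odd_le n : 3 < n -> (prob_not_odd n <= INR 25 / INR n)%R.
Proof.
move=> n_gt3; have := card_not_odd_bound n_gt3.
rewrite /prob_not_odd card_permT card_ord; set b := #|_|; set f := (3 * n)`! => bound.
have f_gt0 : (0 < INR f)%R by apply/lt_0_INR/ltP; rewrite fact_gt0.
have n_gt0 : (0 < INR n)%R by apply/lt_0_INR/ltP; rewrite (ltn_trans _ n_gt3).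
have bound_R : (INR b * INR n <= INR 25 * INR f)%R by rewrite -!mult_INR; apply/le_INR/leP.
rewrite /Rdiv; apply: (Rmult_le_reg_r (INR f * INR n)); first nra.
have -> : (INR b * / INR f * (INR f * INR n) = INR b * INR n)%R by field; lra.
by have -> : (INR 25 * / INR n * (INR f * INR n) = INR 25 * INR f)%R by field; lra.
Qed.

Lemma one_le_ln_sq (x : R) : (4 <= x)%R -> (1 <= ln x ^ 2)%R.
Proof.
move=> x_ge4; have : (1 <= ln x)%R.
  rewrite -[X in (X <= _)%R]ln_exp; apply: Rlt_le; apply: ln_increasing; first exact: exp_pos.
  by have := exp_le_3; lra.
by move=> ln_ge1; simpl; nra.
Qed.

Theorem mainTheorem6 :
  exists (C : R) (N : nat),
    forall n : nat, (2 <= n)%N -> (N <= n)%N ->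
      (prob_not_odd n <= C * (ln (INR n) ^ 2) / INR n)%R.
Proof.
exists (INR 25), 4%N => n _ n_ge4.
have n_ge4R : (4 <= INR n)%R by have := le_INR 4 n (elimT leP n_ge4); simpl; lra.
apply: Rle_trans (prob_not_odd_le n_ge4) _; rewrite /Rdiv.
apply: Rmult_le_compat_r; first by apply/Rlt_le/Rinv_0_lt_compat; lra.
have := one_le_ln_sq n_ge4R; have := pos_INR 25; nra.
Qed.
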